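(* Let $m\equiv 0\pmod 3$ be a positive integer and let $\mathcal Z$ be a three-class symmetric association scheme of order $3m^2$ with adjacency matrices $A_0=I,A_1,A_2,A_3$. Then the following are equivalent: (1) the character table (first eigenmatrix) of $\mathcal Z$ is $$P=\begin{bmatrix}1&m(m-1)&m(m+1)&(m-1)(m+1)\\1&m&0&-m-1\\1&0&-m&m-1\\1&-m&m&-1\end{bmatrix};$$ (2) $\mathcal Z$ is self-dual and $$A_1^3=m^2A_1+\tfrac13m^2(m-1)(m-2)J,\quad A_2^3=m^2A_2+\tfrac13m^2(m+1)(m+2)J,\quad (A_3+I)^3=m^2(A_3+I)+\tfrac13m^2(m-1)(m+1)J.$$
   Context: A three-class symmetric association scheme is a partition of $X\times X$ into relations $R_0=\{(x,x)\},R_1,R_2,R_3$ whose symmetric $0/1$ adjacency matrices satisfy $A_0=I$, $\sum A_i=J$ (all-ones matrix) and $A_iA_j=\sum_h p_{ij}^hA_h$ for constants $p_{ij}^h$. Its Bose–Mesner algebra (span of the $A_i$) has primitive idempotents $E_0=\frac1{|X|}J,E_1,E_2,E_3$; writing $A_j=\sum_i p_j(i)E_i$ and $E_i=\frac1{|X|}\sum_j q_i(j)A_j$, the first eigenmatrix (character table) is $P$ with $P_{ij}=p_j(i)$ and the second eigenmatrix is $Q$ with $Q_{ij}=q_j(i)$ (for a suitable ordering of the idempotents). The scheme is (formally) self-dual if $P=Q$. *)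

From HB Require Import structures.
From mathcomp Require Import all_boot all_order all_algebra all_field.
Set Implicit Arguments. Unset Strict Implicit. Unset Printing Implicit Defensive.
Import Order.TTheory GRing.Theory Num.Theory.
Local Open Scope ring_scope.

Definition i0 : 'I_4 := @Ordinal 4 0 erefl.
Definition i1 : 'I_4 := @Ordinal 4 1 erefl.
Definition i2 : 'I_4 := @Ordinal 4 2 erefl.
Definition i3 : 'I_4 := @Ordinal 4 3 erefl.

Definition Jmx (N : nat) : 'M[algC]_N := const_mx 1.

(* A 3-class scheme on X = 'I_N is given by the "colouring" R : X -> X -> 'I_4,
   i.e. (x,y) \in R_i iff R x y = i.  This makes {R_0,...,R_3} a partition of X*X. *)
Definition adj (N : nat) (R : 'I_N -> 'I_N -> 'I_4) (i : 'I_4) : 'M[algC]_N :=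
  \matrix_(x, y) ((R x y == i)%:R).

Definition sym_scheme3 (N : nat) (R : 'I_N -> 'I_N -> 'I_4) : Prop :=
  [/\ forall x y, (R x y == i0) = (x == y),
      forall x y, R x y = R y x,
      forall i, exists x y, R x y = i
    & exists p : 'I_4 -> 'I_4 -> 'I_4 -> algC,
        forall i j, adj R i *m adj R j = \sum_(h < 4) p i j h *: adj R h].

(* P and Q are the first and second eigenmatrices of the scheme w.r.t. some
   ordering E_0 = J/N, E_1, E_2, E_3 of its primitive idempotents:
   the E_i are nonzero pairwise orthogonal idempotents with
   A_j = sum_i P_ij E_i and E_i = (1/N) sum_j Q_ji A_j (so they lie in the
   Bose-Mesner algebra, and hence are exactly its primitive idempotents). *)
Definition eigenmatrices (N : nat) (R : 'I_N -> 'I_N -> 'I_4)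
    (P Q : 'M[algC]_4) : Prop :=
  exists E : 'I_4 -> 'M[algC]_N,
    [/\ E i0 = N%:R^-1 *: Jmx N,
        forall i j, E i *m E j = (if i == j then E i else 0),
        forall i, E i != 0,
        forall j, adj R j = \sum_(i < 4) P i j *: E i
      & forall i, E i = N%:R^-1 *: \sum_(j < 4) Q j i *: adj R j].

Definition has_char_table (N : nat) (R : 'I_N -> 'I_N -> 'I_4) (P : 'M[algC]_4) :=
  exists Q, eigenmatrices R P Q.

(* (Formally) self-dual: P = Q for a suitable ordering of the idempotents. *)
Definition self_dual (N : nat) (R : 'I_N -> 'I_N -> 'I_4) :=
  exists P, eigenmatrices R P P.

Definition Ptab (m : nat) : 'M[algC]_4 :=
  let x : algC := m%:R in
  \matrix_(i, j) nth 0 (nth [::]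
     [:: [:: 1; x * (x - 1); x * (x + 1); (x - 1) * (x + 1)];
         [:: 1; x; 0; - x - 1];
         [:: 1; 0; - x; x - 1];
         [:: 1; - x; x; -1]] i) j.

From HB Require Import structures.
From mathcomp Require Import all_boot all_order all_algebra all_field.
From mathcomp Require Import ring zify.
Import Order.TTheory GRing.Theory Num.Theory.
Local Open Scope ring_scope.
Set Implicit Arguments. Unset Strict Implicit. Unset Printing Implicit Defensive.

(* Writing every A_j in the basis of primitive idempotents E_i, matrix
   identities in the Bose-Mesner algebra become identities between the
   eigenvalues P_ij, one idempotent at a time.  For (1) => (2) this checks the
   cubic relations row by row of P, and P P = N I forces Q = P.  For (2) => (1),
   the relation A^3 = m^2 A + cJ says that every eigenvalue of A on a
   nontrivial idempotent lies in {0, m, -m}, and that the valency, a natural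
   number, is the unique root > m of t^3 - m^2 t = cN.  The orthogonality
   relation P P = N I then leaves only the table of (1) (here m >= 3 is used);
   it also fixes the last column. *)

Lemma sum_ord4 (V : nmodType) (F : 'I_4 -> V) :
  \sum_(i < 4) F i = F i0 + F i1 + F i2 + F i3.
Proof.
rewrite !big_ord_recl big_ord0 addr0 !addrA.
by congr (_ + _ + _ + _); congr F; apply: val_inj.
Qed.

Lemma ord4P (i : 'I_4) : [\/ i = i0, i = i1, i = i2 | i = i3].
Proof.
case: i => [[|[|[|[|i]]]] lt_i4] //;
  [constructor 1 | constructor 2 | constructor 3 | constructor 4]; exact: val_inj.
Qed.

Lemma scalemx_inj (F : idomainType) (m n : nat) (A : 'M[F]_(m, n)) (a b : F) :
  A != 0 -> a *: A = b *: A -> a = b.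
Proof.
move=> A_neq0 /eqP; rewrite -subr_eq0 -scalerBl scalemx_eq0 (negbTE A_neq0).
by rewrite orbF subr_eq0 => /eqP.
Qed.

Section Spectral.

Variables (F : fieldType) (I : finType) (N : nat) (E : I -> 'M[F]_N).
Hypothesis E_orth : forall i j, E i *m E j = if i == j then E i else 0.

Definition spectral (c : I -> F) : 'M[F]_N := \sum_i c i *: E i.

Lemma spectralD c d : spectral c + spectral d = spectral (fun i => c i + d i).
Proof. by rewrite /spectral -big_split; apply: eq_bigr => i _; rewrite scalerDl. Qed.

Lemma spectralZ a c : a *: spectral c = spectral (fun i => a * c i).
Proof. by rewrite /spectral scaler_sumr; apply: eq_bigr => i _; rewrite scalerA. Qed.

Lemma spectral_delta k : spectral (fun i => (i == k)%:R) = E k.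
Proof.
rewrite /spectral (bigD1 k) //= eqxx scale1r big1 ?addr0 // => i /negbTE->.
exact: scale0r.
Qed.

Lemma mulmx_idem_spectral k c : E k *m spectral c = c k *: E k.
Proof.
rewrite /spectral mulmx_sumr (bigD1 k) //= -scalemxAr E_orth eqxx.
rewrite big1 ?addr0 // => i neq_ik.
by rewrite -scalemxAr E_orth eq_sym (negbTE neq_ik) scaler0.
Qed.

Lemma spectralM c d : spectral c *m spectral d = spectral (fun i => c i * d i).
Proof.
rewrite {1}/spectral mulmx_suml; apply: eq_bigr => i _.
by rewrite -scalemxAl mulmx_idem_spectral scalerA.
Qed.

Hypothesis E_neq0 : forall i, E i != 0.

Lemma spectral_inj c d : spectral c = spectral d -> c =1 d.
Proof.
move=> eq_cd k; apply: (scalemx_inj (E_neq0 k)).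
by rewrite -!mulmx_idem_spectral eq_cd.
Qed.

Lemma spectral_cubic a b (s t : F) :
  spectral a *m spectral a *m spectral a = s *: spectral a + t *: spectral b <->
  forall i, a i ^+ 3 = s * a i + t * b i.
Proof.
rewrite !spectralM !spectralZ spectralD; split=> [/spectral_inj cubic i | cubic].
  by have := cubic i => /= <-; ring.
by apply: eq_bigr => i _; congr (_ *: _); rewrite -cubic; ring.
Qed.

End Spectral.

Lemma adj_diag (N : nat) (R : 'I_N -> 'I_N -> 'I_4) :
  (forall x y, (R x y == i0) = (x == y)) -> adj R i0 = 1%:M.
Proof. by move=> R_diag; apply/matrixP => x y; rewrite !mxE R_diag. Qed.

Section Eigenbasis.

Variables (N : nat) (R : 'I_N -> 'I_N -> 'I_4) (P Q : 'M[algC]_4).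
Variable E : 'I_4 -> 'M[algC]_N.
Hypotheses (N_gt0 : (0 < N)%N) (E0 : E i0 = N%:R^-1 *: Jmx N).
Hypothesis E_orth : forall i j, E i *m E j = if i == j then E i else 0.
Hypothesis E_neq0 : forall i, E i != 0.
Hypothesis adjE : forall j, adj R j = spectral E (fun i => P i j).
Hypothesis E_adj : forall i, E i = N%:R^-1 *: \sum_(j < 4) Q j i *: adj R j.

Let N_neq0 : (N%:R : algC) != 0. Proof. by rewrite pnatr_eq0 -lt0n. Qed.

Lemma mulmx_idem_adj k j : E k *m adj R j = P k j *: E k.
Proof. by rewrite adjE mulmx_idem_spectral. Qed.

Lemma mulmx_eigenmatrices : P *m Q = N%:R%:M.
Proof.
apply/matrixP => k j; rewrite !mxE; apply: (mulfI (invr_neq0 N_neq0)).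
rewrite mulrnAr mulVf //; apply: (scalemx_inj (E_neq0 k)).
transitivity (E k *m E j);
  last by rewrite E_orth; case: eqP; rewrite ?mulr1n ?mulr0n ?scale1r ?scale0r.
rewrite [E j]E_adj -scalemxAr mulmx_sumr -scalerA scaler_suml; congr (_ *: _).
by apply: eq_bigr => i _; rewrite -scalemxAr mulmx_idem_adj scalerA mulrC.
Qed.

Lemma Jmx_spectral : Jmx N = spectral E (fun i => N%:R * (i == i0)%:R).
Proof. by rewrite -spectralZ spectral_delta E0 scalerA mulfV // scale1r. Qed.

Lemma valency_nat j : exists n : nat, P i0 j = n%:R.
Proof.
pose y := Ordinal N_gt0.
have := congr1 (fun M : 'M[algC]_N => M y y) (mulmx_idem_adj i0 j).
rewrite E0 -scalemxAl !mxE; under eq_bigr do rewrite !mxE mul1r.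
rewrite -natr_sum => eq_val; exists (\sum_z (R z y == j))%N.
by apply: (mulfI (invr_neq0 N_neq0)); rewrite eq_val mulr1 mulrC.
Qed.

Hypothesis adj0 : adj R i0 = 1%:M.

Lemma eigenvalue_adj0 k : P k i0 = 1.
Proof.
apply/esym/(scalemx_inj (E_neq0 k)).
by rewrite -mulmx_idem_adj adj0 mulmx1 scale1r.
Qed.

Lemma one_spectral : 1%:M = spectral E (fun => 1).
Proof.
by rewrite -adj0 adjE; apply: eq_bigr => i _; rewrite eigenvalue_adj0.
Qed.

End Eigenbasis.

Lemma eigenmatrices_dual_eq (N : nat) (R : 'I_N -> 'I_N -> 'I_4) (P Q : 'M_4) :
  (0 < N)%N -> P *m P = N%:R%:M -> eigenmatrices R P Q -> Q = P.
Proof.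
move=> N_gt0 PP [E [E0 E_orth E_neq0 adjE E_adj]].
have PQ := mulmx_eigenmatrices N_gt0 E_orth E_neq0 adjE E_adj.
apply: (scalerI (a := N%:R)); first by rewrite pnatr_eq0 -lt0n.
by rewrite -mul_scalar_mx -PP -mulmxA PQ mul_mx_scalar.
Qed.

Lemma int_unit_cases (a : int) : -1 <= a <= 1 -> [\/ a = -1, a = 0 | a = 1].
Proof.
move=> a_bound; have : (a == -1) || (a == 0) || (a == 1) by lia.
by case/orP=> [/orP[]|] /eqP ->; [constructor 1 | constructor 2 | constructor 3].
Qed.

(* Entries (0,2), (0,1) and (1,1) of P P = N I divided by m, where P_k1 = m a_k,
   P_k2 = m b_k and b_1 = 0.  nia needs the hint (m - 3)^2 >= 0. *)
Lemma column2_forced (m b1 b2 b3 : int) : 3 <= m ->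
  -1 <= b1 <= 1 -> -1 <= b2 <= 1 -> -1 <= b3 <= 1 ->
  (m + 1) + m * (m - 1) * b1 + m * (m + 1) * b2 + (m * m - 1) * b3 = 0 ->
  [/\ b1 = 0, b2 = -1 & b3 = 1].
Proof.
move=> m_ge3 /int_unit_cases[]-> /int_unit_cases[]-> /int_unit_cases[]-> e.
all: have sq : 0 <= (m - 3) * (m - 3) by nia.
all: first [by split | exfalso; nia].
Qed.

Lemma column1_forced (m a1 a2 a3 : int) : 3 <= m ->
  -1 <= a1 <= 1 -> -1 <= a2 <= 1 -> -1 <= a3 <= 1 ->
  (m - 1) + m * (m - 1) * a1 + m * (m + 1) * a2 + (m * m - 1) * a3 = 0 ->
  (m - 1) + m * (a1 * a1) - (m * a1 + 1) * a3 - 3 * m = 0 ->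
  [/\ a1 = 1, a2 = 0 & a3 = -1].
Proof.
move=> m_ge3 /int_unit_cases[]-> /int_unit_cases[]-> /int_unit_cases[]-> e1 e3.
all: have sq : 0 <= (m - 3) * (m - 3) by nia.
all: first [by split | exfalso; nia].
Qed.

Lemma cubic_root_eq (t k M : int) : 0 <= t -> 0 <= M -> M < k ->
  t ^+ 3 - M ^+ 2 * t = k ^+ 3 - M ^+ 2 * k -> t = k.
Proof.
move=> t_ge0 M_ge0 lt_Mk e.
have : (t - k) * (t ^+ 2 + t * k + k ^+ 2 - M ^+ 2) = 0.
  by rewrite -[0](subrr (k ^+ 3 - M ^+ 2 * k)) -{1}e; ring.
move/eqP; rewrite mulf_eq0 subr_eq0 => /orP[/eqP // |].
by rewrite gt_eqF //; nia.
Qed.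

Lemma nat_cubic_root_eq (m n : nat) (k : int) : m%:Z < k ->
  (n%:R : algC) ^+ 3 = m%:R ^+ 2 * n%:R + (k ^+ 3 - m%:Z ^+ 2 * k)%:~R ->
  (n%:R : algC) = k%:~R.
Proof.
move=> lt_mk e; suff <- : n%:Z = k by [].
apply: (cubic_root_eq _ _ lt_mk) => //; apply: (@intr_inj algC).
have -> : ((k ^+ 3 - m%:Z ^+ 2 * k)%:~R : algC) = n%:R ^+ 3 - m%:R ^+ 2 * n%:R.
  by rewrite e; ring.
ring.
Qed.

Lemma cubic_root_cases (F : idomainType) (q x : F) : q ^+ 3 = x ^+ 2 * q ->
  exists2 a : int, -1 <= a <= 1 & q = x * a%:~R.
Proof.
move=> e; have : q * (q - x) * (q + x) = 0.
  by rewrite -[0](subrr (x ^+ 2 * q)) -{1}e; ring.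
move/eqP; rewrite !mulf_eq0 subr_eq0 addr_eq0 => /orP[/orP[] | ] /eqP ->.
- by exists 0 => //; ring.
- by exists 1 => //; ring.
- by exists (-1) => //; ring.
Qed.

Lemma scaled_intr_eq0 (m : nat) (z : int) (a b : algC) : (0 < m)%N ->
  a = b -> m%:R * z%:~R = a - b -> z = 0.
Proof.
move=> m_gt0 -> /eqP; rewrite subrr mulf_eq0 pnatr_eq0 eqn0Ngt m_gt0 intr_eq0.
by move/eqP.
Qed.

Section CharacterTable.

Variable m : nat.
Local Notation x := (m%:R : algC).
Local Notation N := (3 * m ^ 2)%N.

Lemma Ptab_mulmx : Ptab m *m Ptab m = N%:R%:M.
Proof.
apply/matrixP => k j; rewrite !mxE sum_ord4 /Ptab !mxE.
by case: (ord4P k) => ->; case: (ord4P j) => ->; rewrite /= ?mulr1n ?mulr0n; ring.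
Qed.

Hypothesis m_ge3 : (3 <= m)%N.

Lemma Ptab_of_entries (P : 'M[algC]_4) :
  P *m P = N%:R%:M -> (forall k, P k i0 = 1) ->
  P i0 i1 = x * (x - 1) -> P i0 i2 = x * (x + 1) ->
  (forall k, k != i0 -> exists2 a : int, -1 <= a <= 1 & P k i1 = x * a%:~R) ->
  (forall k, k != i0 -> exists2 b : int, -1 <= b <= 1 & P k i2 = x * b%:~R) ->
  P = Ptab m.
Proof.
move=> PP col0 P01 P02 col1 col2.
have m_gt0 : (0 < m)%N by apply: leq_trans m_ge3.
have PPE k j : \sum_i P k i * P i j = (k == j)%:R * N%:R.
  by have := congr1 (fun M : 'M[algC]_4 => M k j) PP; rewrite !mxE => ->; rewrite mulr_natl.
have col3 k : P k i3 = (k == i0)%:R * N%:R - 1 - P k i1 - P k i2.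
  by rewrite -PPE sum_ord4 !col0; ring.
have [a1 a1_b P11] := col1 i1 isT; have [a2 a2_b P21] := col1 i2 isT.
have [a3 a3_b P31] := col1 i3 isT; have [b1 b1_b P12] := col2 i1 isT.
have [b2 b2_b P22] := col2 i2 isT; have [b3 b3_b P32] := col2 i3 isT.
have [b1E b2E b3E] : [/\ b1 = 0, b2 = -1 & b3 = 1].
  apply: (@column2_forced m%:Z _ _ _ _ b1_b b2_b b3_b); first by lia.
  apply: (scaled_intr_eq0 m_gt0 (PPE i0 i2)).
  by rewrite sum_ord4 col3 col0 P01 P02 P12 P22 P32 /=; ring.
subst b1 b2 b3.
have [a1E a2E a3E] : [/\ a1 = 1, a2 = 0 & a3 = -1].
  apply: (@column1_forced m%:Z _ _ _ _ a1_b a2_b a3_b); first by lia.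
    apply: (scaled_intr_eq0 m_gt0 (PPE i0 i1)).
    by rewrite sum_ord4 col3 col0 P01 P02 P11 P21 P31 /=; ring.
  apply: (scaled_intr_eq0 m_gt0 (PPE i1 i1)).
  by rewrite sum_ord4 col3 col0 P01 P11 P12 P21 P31 /=; ring.
subst a1 a2 a3.
apply/matrixP => i j; rewrite /Ptab !mxE.
case: (ord4P i) => ->; case: (ord4P j) => ->;
  rewrite /= ?col0 ?col3 ?P01 ?P02 ?P11 ?P12 ?P21 ?P22 ?P31 ?P32 /=; ring.
Qed.

Lemma Ptab_of_cubics (P : 'M[algC]_4) :
  P *m P = N%:R%:M -> (forall k, P k i0 = 1) ->
  (forall j, exists n : nat, P i0 j = n%:R) ->
  (forall k, P k i1 ^+ 3 = x ^+ 2 * P k i1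
     + 3^-1 * x ^+ 2 * (x - 1) * (x - 2) * (N%:R * (k == i0)%:R)) ->
  (forall k, P k i2 ^+ 3 = x ^+ 2 * P k i2
     + 3^-1 * x ^+ 2 * (x + 1) * (x + 2) * (N%:R * (k == i0)%:R)) ->
  P = Ptab m.
Proof.
move=> PP col0 val cubic1 cubic2.
apply: Ptab_of_entries => //.
- have [n Pn] := val i1; have := cubic1 i0; rewrite eqxx Pn => e.
  rewrite (@nat_cubic_root_eq m n (m%:Z * (m%:Z - 1))); [ring | nia |].
  by rewrite e mulr1n mulr1; congr (_ + _); field.
- have [n Pn] := val i2; have := cubic2 i0; rewrite eqxx Pn => e.
  rewrite (@nat_cubic_root_eq m n (m%:Z * (m%:Z + 1))); [ring | nia |].
  by rewrite e mulr1n mulr1; congr (_ + _); field.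
- move=> k k_neq0; apply: cubic_root_cases.
  by rewrite cubic1 (negbTE k_neq0) !mulr0 addr0.
- move=> k k_neq0; apply: cubic_root_cases.
  by rewrite cubic2 (negbTE k_neq0) !mulr0 addr0.
Qed.

End CharacterTable.

Theorem lemma5p1 (m : nat) (R : 'I_(3 * m ^ 2) -> 'I_(3 * m ^ 2) -> 'I_4) :
  (0 < m)%N -> (3 %| m)%N -> sym_scheme3 R ->
  let N := (3 * m ^ 2)%N in
  let x : algC := m%:R in
  let A := adj R in
  let J := Jmx N in
  has_char_table R (Ptab m) <->
  [/\ self_dual R,
      A i1 *m A i1 *m A i1
        = x ^+ 2 *: A i1 + (3^-1 * x ^+ 2 * (x - 1) * (x - 2)) *: J,
      A i2 *m A i2 *m A i2
        = x ^+ 2 *: A i2 + (3^-1 * x ^+ 2 * (x + 1) * (x + 2)) *: J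
    & (A i3 + 1%:M) *m (A i3 + 1%:M) *m (A i3 + 1%:M)
        = x ^+ 2 *: (A i3 + 1%:M) + (3^-1 * x ^+ 2 * (x - 1) * (x + 1)) *: J].
Proof.
move=> m_gt0 m3 [R_diag _ _ _] N x A J.
have N_gt0 : (0 < N)%N by rewrite muln_gt0 expn_gt0 m_gt0.
have adj0 := adj_diag R_diag.
split.
- case=> Q eig; have Q_eq := eigenmatrices_dual_eq N_gt0 (Ptab_mulmx m) eig.
  subst Q.
  have [E [E0 E_orth E_neq0 adjE E_adj]] := eig.
  split; [by exists (Ptab m) | | |];
    rewrite /A /J ?(one_spectral E_orth E_neq0 adjE adj0) !adjE;
    rewrite (Jmx_spectral N_gt0 E0) ?spectralD; apply/spectral_cubic => // i;
    by case: (ord4P i) => ->; rewrite /Ptab /x /N !mxE /=; field.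
- case=> [[P eig] cubic1 cubic2 _].
  have [E [E0 E_orth E_neq0 adjE E_adj]] := eig.
  move: cubic1 cubic2; rewrite /A /J !adjE (Jmx_spectral N_gt0 E0).
  move=> /(spectral_cubic E_orth E_neq0) cubic1 /(spectral_cubic E_orth E_neq0) cubic2.
  suff <- : P = Ptab m by exists P.
  apply: Ptab_of_cubics cubic1 cubic2.
  - exact: dvdn_leq.
  - exact: mulmx_eigenmatrices N_gt0 E_orth E_neq0 adjE E_adj.
  - exact: eigenvalue_adj0 E_orth E_neq0 adjE adj0.
  - exact: valency_nat N_gt0 E0 E_orth adjE.
Qed.
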